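(* Let $\alpha>0$, $\kappa>1/2$, $\gamma<3/2$ and $\nu\in\mathbb R$. Then for every $C>1$ there exist $a,b\in\mathbb N$ and $\beta\in(0,1)$ such that for every $C_{\mathrm{start}}\ge1$ and every $C_z\in[0,\infty)$ the parameters $$\lambda_n=a^{(b^n)},\quad r_n=C_{\mathrm{start}}(C_z^2+1)\lambda_0^\beta\lambda_n^{-\beta}\ (n\ge0),\qquad \ell_n=\lambda_n^{-1},\quad \mu_n=\sqrt{\lambda_{n-1}\lambda_n}\ (n\ge1)$$ satisfy, for all $n\ge1$: (R1) $\mu_n\le\lambda_n$; (R2) $\ell_n\le1$; (R3) $\lambda_n\in\mathbb N$, $12\lambda_n\le4\mu_{n+1}$, $10\le\mu_n$, $48\lambda_n\le\lambda_{n+1}$; and $$C\big(\mathfrak E^{\mathrm{miss}}_n+\mathfrak E^{\mathrm{com}}_n+\mathfrak E^{\mathrm{time}}_n+\mathfrak E^{\mathrm{dis}}_n+\mathfrak E^{\mathrm{trans}}_n+\mathfrak E^{\mathrm{sto}}_n\big)\le r_n ,$$ where, with $\mathfrak S_{N,\theta}:=\sum_{k=1}^N4^{N-k}\ell_k^{-\theta}r_{k-1}^{1/2}$ (so $\mathfrak S_{0,\theta}=0$), $$\mathfrak E^{\mathrm{miss}}_n=\Big\{\log\mu_n\Big(\tfrac{\lambda_{n-1}}{\mu_n}+\tfrac{\mu_n}{\lambda_n}\Big)^2+\tfrac{\lambda_{n-1}}{\lambda_n}\Big\}r_{n-1},$$ $$\mathfrak E^{\mathrm{com}}_n=\log(\lambda_n)\lambda_{n-1}\ell_n^\alpha\mathfrak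 S_{n-1,\alpha}\mathfrak S_{n-1,0}+\log(\lambda_n)\lambda_{n-1}^{1/2}\big(\ell_n^\alpha\mathfrak S_{n-1,\alpha}+\lambda_{n-1}^{-\kappa}\mathfrak S_{n-1,0}\big)C_z+\log(\lambda_n)(\ell_n^\alpha+\lambda_{n-1}^{-\kappa})C_z^2,$$ $$\mathfrak E^{\mathrm{time}}_n=\log(\lambda_n)\lambda_n^{-3/2}r_{n-1}^{1/2}\ell_n^{-1},\qquad \mathfrak E^{\mathrm{dis}}_n=\log(\lambda_n)|\nu|\lambda_n^{\gamma-3/2}r_{n-1}^{1/4},$$ $$\mathfrak E^{\mathrm{trans}}_n=\log(\lambda_n)\lambda_{n-1}^{1/2}\lambda_n^{-1/2}r_{n-1}^{1/2}\mathfrak S_{n-1,0},\qquad \mathfrak E^{\mathrm{sto}}_n=\log(\lambda_n)\lambda_n^{-1/2}r_{n-1}^{1/2}C_z.$$ Moreover $b$ can be taken to be any integer with $b>1+1/\alpha$, and $\beta$ can be taken so that $\beta<(\alpha(b-1)-1)/b$.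
   Context: All quantities are real numbers; $\log$ is the natural logarithm. No probabilistic content is involved. *)

From Stdlib Require Import Reals.
Open Scope R_scope.

Fixpoint sumR (f : nat -> R) (N : nat) : R :=
  match N with
  | O => 0
  | S m => sumR f m + f (S m)
  end.

Section Params.
Variables (a b : nat) (beta Cstart Cz : R).

Definition lam (n : nat) : R := INR (Nat.pow a (Nat.pow b n)).
Definition rr (n : nat) : R :=
  Cstart * (Cz ^ 2 + 1) * Rpower (lam 0) beta * Rpower (lam n) (- beta).
Definition ell (n : nat) : R := / lam n.
Definition mu (n : nat) : R := sqrt (lam (n - 1) * lam n).

Definition SS (N : nat) (theta : R) : R :=
  sumR (fun k => 4 ^ (N - k) * Rpower (ell k) (- theta)
                 * Rpower (rr (k - 1)) (1/2)) N.

Definition Emiss (n : nat) : R :=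
  (ln (mu n) * (lam (n - 1) / mu n + mu n / lam n) ^ 2
   + lam (n - 1) / lam n) * rr (n - 1).

Definition Ecom (alpha kappa : R) (n : nat) : R :=
  ln (lam n) * lam (n - 1) * Rpower (ell n) alpha
     * SS (n - 1) alpha * SS (n - 1) 0
  + ln (lam n) * Rpower (lam (n - 1)) (1/2)
     * (Rpower (ell n) alpha * SS (n - 1) alpha
        + Rpower (lam (n - 1)) (- kappa) * SS (n - 1) 0) * Cz
  + ln (lam n) * (Rpower (ell n) alpha + Rpower (lam (n - 1)) (- kappa))
     * Cz ^ 2.

Definition Etime (n : nat) : R :=
  ln (lam n) * Rpower (lam n) (- (3/2)) * Rpower (rr (n - 1)) (1/2) * / ell n.

Definition Edis (gamma nu : R) (n : nat) : R :=
  ln (lam n) * Rabs nu * Rpower (lam n) (gamma - 3/2)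
    * Rpower (rr (n - 1)) (1/4).

Definition Etrans (n : nat) : R :=
  ln (lam n) * Rpower (lam (n - 1)) (1/2) * Rpower (lam n) (- (1/2))
    * Rpower (rr (n - 1)) (1/2) * SS (n - 1) 0.

Definition Esto (n : nat) : R :=
  ln (lam n) * Rpower (lam n) (- (1/2)) * Rpower (rr (n - 1)) (1/2) * Cz.

End Params.

From Stdlib Require Import Reals Lra Lia Psatz.
Open Scope R_scope.

(* Put t = ln lambda_{n-1} = b^{n-1} ln a.  Then lambda_{n-1} = e^t, lambda_n = e^{bt},
   mu_n = e^{(1+b)t/2} and r_n = K a^beta e^{-beta b t} with K = C_start (C_z^2 + 1), while
   S_{n-1,theta} <= b^{3(n-1)} e^{theta t} sqrt K.  Hence each summand of the error is at most
   a polynomial of degree 7 in t times e^{X}, where the smallness of beta makes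
   X <= -beta t - beta b t; that is, each summand is at most p(t) e^{-beta t} r_n.  Since
   t >= ln a, choosing a large makes C (9 + |nu|) (2b + 3) t^7 e^{-beta t} <= 1, and also
   gives the growth conditions (R1)-(R3). *)

Lemma exp_le_compat x y : x <= y -> exp x <= exp y.
Proof. intros [Hlt | ->]; [left; apply exp_increasing | right]; auto. Qed.

Lemma exp_minus x y : exp (x - y) = exp x / exp y.
Proof. unfold Rminus, Rdiv. rewrite exp_plus, exp_Ropp. reflexivity. Qed.

Lemma exp_mult_INR n x : exp (INR n * x) = exp x ^ n.
Proof.
  rewrite <- Rpower_pow by apply exp_pos. unfold Rpower. rewrite ln_exp. reflexivity.
Qed.

Lemma pow_div_le_exp (n : nat) x : 0 <= x -> (x / INR n) ^ n <= exp x.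
Proof.
  intros Hx. destruct n as [|n].
  - pose proof (exp_ineq1_le x). simpl. lra.
  - assert (HN : 0 < INR (S n)) by (apply lt_0_INR; lia).
    assert (Hxn : 0 <= x / INR (S n))
      by (apply Rmult_le_pos; [lra | left; apply Rinv_0_lt_compat; lra]).
    replace x with (INR (S n) * (x / INR (S n))) at 2 by (field; lra).
    rewrite exp_mult_INR. apply pow_incr.
    pose proof (exp_ineq1_le (x / INR (S n))). lra.
Qed.

Lemma pow_mul_exp_neg_le (n : nat) c beta t : 0 < c -> 0 < beta -> 0 < t ->
  c * (INR (S n) / beta) ^ S n <= t -> c * t ^ n * exp (- (beta * t)) <= 1.
Proof.
  intros Hc Hbeta Ht Hct.
  set (N := INR (S n)). assert (HN : 0 < N) by (apply lt_0_INR; lia).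
  set (q := (N / beta) ^ S n).
  assert (Hq : 0 < q) by (apply pow_lt, Rdiv_lt_0_compat; lra).
  assert (Htq : t ^ S n = (beta * t / N) ^ S n * q).
  { unfold q. rewrite <- Rpow_mult_distr. f_equal. field. lra. }
  assert (Hpow : c * t ^ n * q <= exp (beta * t) * q).
  { apply Rle_trans with (t ^ S n).
    - replace (c * t ^ n * q) with (c * q * t ^ n) by ring.
      apply Rmult_le_compat_r; [apply pow_le; lra | exact Hct].
    - rewrite Htq. apply Rmult_le_compat_r; [lra|]. apply pow_div_le_exp. nra. }
  apply Rmult_le_reg_r in Hpow; [|exact Hq].
  rewrite exp_Ropp. pose proof (exp_pos (beta * t)).
  apply Rmult_le_reg_r with (exp (beta * t)); [lra|].
  replace (c * t ^ n * / exp (beta * t) * exp (beta * t)) with (c * t ^ n) by (field; lra).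
  lra.
Qed.

Lemma sumR_nonneg f N : (forall k, 0 <= f k) -> 0 <= sumR f N.
Proof. intros Hf. induction N as [|N IH]; simpl; [lra|]. specialize (Hf (S N)). lra. Qed.

Lemma sumR_le_mul f N M : (forall k, (1 <= k <= N)%nat -> f k <= M) ->
  sumR f N <= INR N * M.
Proof.
  induction N as [|N IH]; intros Hf; simpl sumR; [simpl; lra|].
  rewrite S_INR.
  assert (sumR f N <= INR N * M) by (apply IH; intros; apply Hf; lia).
  assert (f (S N) <= M) by (apply Hf; lia). lra.
Qed.

Lemma INR_le_pow2 n : INR n <= 2 ^ n.
Proof.
  induction n as [|n IH]; [simpl; lra|].
  rewrite S_INR. simpl. pose proof (pow_R1_Rle 2 n ltac:(lra)). lra.
Qed.

Lemma INR_mul_pow4_le n x : 2 <= x -> INR n * 4 ^ n <= (x ^ n) ^ 3.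
Proof.
  intros Hx.
  assert (H2 : 2 ^ n <= x ^ n) by (apply pow_incr; lra).
  assert (0 <= 2 ^ n) by (apply pow_le; lra).
  pose proof (INR_le_pow2 n). pose proof (pos_INR n).
  replace 4 with (2 * 2) by ring. rewrite Rpow_mult_distr.
  replace ((x ^ n) ^ 3) with (x ^ n * (x ^ n * x ^ n)) by ring.
  apply Rmult_le_compat; nra.
Qed.

Section ExponentialForm.
Variables (a b : nat) (beta Cs Cz : R).
Hypothesis Ha : (0 < a)%nat.

Lemma lam_exp n : lam a b n = exp (INR b ^ n * ln (INR a)).
Proof.
  unfold lam. rewrite pow_INR, <- Rpower_pow by (apply lt_0_INR; exact Ha).
  unfold Rpower. rewrite pow_INR. reflexivity.
Qed.

Lemma ln_lam n : ln (lam a b n) = INR b ^ n * ln (INR a).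
Proof. rewrite lam_exp, ln_exp. reflexivity. Qed.

Lemma Rpower_lam n y : Rpower (lam a b n) y = exp (y * (INR b ^ n * ln (INR a))).
Proof. unfold Rpower. rewrite ln_lam. reflexivity. Qed.

Lemma ell_exp n : ell a b n = exp (- (INR b ^ n * ln (INR a))).
Proof. unfold ell. rewrite lam_exp, exp_Ropp. reflexivity. Qed.

Lemma Rpower_ell n y : Rpower (ell a b n) y = exp (- (y * (INR b ^ n * ln (INR a)))).
Proof. unfold Rpower. rewrite ell_exp, ln_exp. f_equal. ring. Qed.

Lemma mu_exp n :
  mu a b n = exp ((INR b ^ (n - 1) + INR b ^ n) * ln (INR a) / 2).
Proof.
  unfold mu. rewrite !lam_exp, <- exp_plus, <- Rpower_sqrt by apply exp_pos.
  unfold Rpower. rewrite ln_exp. f_equal. field.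
Qed.

Lemma rr_exp n : rr a b beta Cs Cz n =
  Cs * (Cz ^ 2 + 1) * exp (beta * ln (INR a))
    * exp (- (beta * (INR b ^ n * ln (INR a)))).
Proof.
  unfold rr. rewrite !Rpower_lam. simpl (INR b ^ 0). rewrite Rmult_1_l.
  f_equal. f_equal. ring.
Qed.

End ExponentialForm.

Section Estimates.
Variables (alpha kappa gamma nu : R) (a b : nat) (beta Cs Cz : R) (m : nat).
Hypotheses (Ha : (0 < a)%nat) (HL : 24 <= ln (INR a)) (Hb : 2 <= INR b)
  (Hbeta : 0 < beta) (HCs : 1 <= Cs) (HCz : 0 <= Cz).

Local Notation B := (INR b).
Local Notation L := (ln (INR a)).
Local Notation u := (INR b ^ m).
Local Notation t := (INR b ^ m * ln (INR a)).
Local Notation K := (Cs * (Cz ^ 2 + 1)).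
Local Notation s := (Rpower (Cs * (Cz ^ 2 + 1)) (1/2)).
Local Notation r := (rr a b beta Cs Cz).

(* The statements below concern step n = m + 1, so that t = ln lambda_m. *)

Lemma u_ge_1 : 1 <= u.
Proof. apply pow_R1_Rle. lra. Qed.

Lemma u_le_t : u <= t.
Proof. pose proof u_ge_1. nra. Qed.

Lemma t_ge_L : L <= t.
Proof. pose proof u_ge_1. nra. Qed.

Lemma t_ge_1 : 1 <= t.
Proof. pose proof t_ge_L. lra. Qed.

Lemma Bt_ge_48 : 48 <= B * t.
Proof. pose proof t_ge_L. nra. Qed.

Lemma lam_pred : lam a b m = exp t.
Proof. apply lam_exp, Ha. Qed.

Lemma lam_succ : lam a b (S m) = exp (B * t).
Proof. rewrite lam_exp by exact Ha. f_equal. simpl. ring. Qed.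

Lemma lam_succ_succ : lam a b (S (S m)) = exp (B * (B * t)).
Proof. rewrite lam_exp by exact Ha. f_equal. simpl. ring. Qed.

Lemma mu_succ : mu a b (S m) = exp ((t + B * t) / 2).
Proof.
  rewrite mu_exp, Nat.sub_succ, Nat.sub_0_r by exact Ha. f_equal. simpl. field.
Qed.

Lemma mu_succ_succ : mu a b (S (S m)) = exp ((B * t + B * (B * t)) / 2).
Proof.
  rewrite mu_exp, Nat.sub_succ, Nat.sub_0_r by exact Ha. f_equal. simpl. field.
Qed.

Lemma ln_lam_succ : ln (lam a b (S m)) = B * t.
Proof. rewrite lam_succ, ln_exp. reflexivity. Qed.

Lemma Rpower_lam_pred y : Rpower (lam a b m) y = exp (y * t).
Proof. apply Rpower_lam, Ha. Qed.

Lemma Rpower_lam_succ y : Rpower (lam a b (S m)) y = exp (y * (B * t)).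
Proof. unfold Rpower. rewrite ln_lam_succ. reflexivity. Qed.

Lemma Rpower_ell_succ y : Rpower (ell a b (S m)) y = exp (- (y * (B * t))).
Proof. rewrite Rpower_ell by exact Ha. do 3 f_equal. simpl. ring. Qed.

Lemma rr_pred : r m = K * exp (beta * L) * exp (- (beta * t)).
Proof. apply rr_exp, Ha. Qed.

Lemma rr_succ : r (S m) = K * exp (beta * L) * exp (- (beta * (B * t))).
Proof. rewrite rr_exp by exact Ha. do 3 f_equal. simpl. ring. Qed.

Lemma mu_le_lam : mu a b (S m) <= lam a b (S m).
Proof.
  rewrite mu_succ, lam_succ. apply exp_le_compat.
  pose proof t_ge_L. nra.
Qed.

Lemma ell_le_1 : ell a b (S m) <= 1.
Proof.
  rewrite ell_exp, <- exp_0 by exact Ha. apply exp_le_compat.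
  pose proof t_ge_L. simpl. nra.
Qed.

Lemma lam_le_mu_succ : 12 * lam a b (S m) <= 4 * mu a b (S (S m)).
Proof.
  rewrite lam_succ, mu_succ_succ.
  replace ((B * t + B * (B * t)) / 2) with (B * t + (B - 1) * (B * t) / 2) by field.
  rewrite exp_plus. pose proof (exp_pos (B * t)). pose proof Bt_ge_48.
  assert (3 <= exp ((B - 1) * (B * t) / 2)).
  { pose proof (exp_ineq1_le ((B - 1) * (B * t) / 2)). nra. }
  nra.
Qed.

Lemma mu_ge_10 : 10 <= mu a b (S m).
Proof.
  rewrite mu_succ. pose proof (exp_ineq1_le ((t + B * t) / 2)). pose proof t_ge_L. nra.
Qed.

Lemma lam_mul48_le : 48 * lam a b (S m) <= lam a b (S (S m)).
Proof.
  rewrite lam_succ, lam_succ_succ.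
  replace (B * (B * t)) with (B * t + (B - 1) * (B * t)) by ring.
  rewrite exp_plus. pose proof (exp_pos (B * t)). pose proof Bt_ge_48.
  assert (48 <= exp ((B - 1) * (B * t))).
  { pose proof (exp_ineq1_le ((B - 1) * (B * t))). nra. }
  nra.
Qed.

Lemma K_ge_1 : 1 <= K.
Proof. pose proof (pow2_ge_0 Cz). nra. Qed.

Lemma K_le_mul_exp : K <= K * exp (beta * L).
Proof.
  pose proof K_ge_1. assert (1 <= exp (beta * L)).
  { rewrite <- exp_0. apply exp_le_compat. nra. }
  nra.
Qed.

Lemma rr_pos n : 0 < r n.
Proof.
  rewrite rr_exp by exact Ha. pose proof K_ge_1.
  pose proof (exp_pos (beta * L)). pose proof (exp_pos (- (beta * (INR b ^ n * L)))).
  apply Rmult_lt_0_compat; [apply Rmult_lt_0_compat|]; lra.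
Qed.

Lemma rr_le_K n : r n <= K.
Proof.
  rewrite rr_exp, Rmult_assoc, <- exp_plus by exact Ha. pose proof K_ge_1.
  rewrite <- (Rmult_1_r K) at 2. apply Rmult_le_compat_l; [lra|].
  rewrite <- exp_0. apply exp_le_compat.
  pose proof (pow_R1_Rle B n ltac:(lra)).
  assert (0 <= beta * (L * (B ^ n - 1))) by (apply Rmult_le_pos; nra). lra.
Qed.

Lemma Rpower_rr_le n p : 0 <= p -> Rpower (r n) p <= Rpower K p.
Proof. intros Hp. apply Rle_Rpower_l; [exact Hp | split; [apply rr_pos | apply rr_le_K]]. Qed.

Lemma Rpower_rr_nonneg n p : 0 <= Rpower (r n) p.
Proof. left. apply exp_pos. Qed.

Lemma Rpower_rr_le_K n p : 0 <= p <= 1 -> Rpower (r n) p <= K.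
Proof.
  intros Hp. pose proof K_ge_1. apply Rle_trans with (Rpower K p).
  - apply Rpower_rr_le. lra.
  - rewrite <- (Rpower_1 K) at 2 by lra. apply Rle_Rpower; lra.
Qed.

Lemma sqrt_K_sqr : s * s = K.
Proof.
  pose proof K_ge_1. rewrite <- Rpower_plus. replace (1/2 + 1/2) with 1 by field.
  apply Rpower_1. lra.
Qed.

Lemma sqrt_K_ge_1 : 1 <= s.
Proof.
  pose proof K_ge_1. apply Rle_trans with (Rpower K 0).
  - rewrite Rpower_O; lra.
  - apply Rle_Rpower; lra.
Qed.

Lemma Cz_mul_sqrt_K_le : s * Cz <= K.
Proof.
  pose proof sqrt_K_sqr. pose proof sqrt_K_ge_1. pose proof (pow2_ge_0 Cz).
  assert (Cz ^ 2 + 1 <= K) by nra.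
  assert (Cz <= s) by nra.
  nra.
Qed.

Lemma Cz_sqr_le_K : Cz ^ 2 <= K.
Proof. pose proof (pow2_ge_0 Cz). nra. Qed.

Lemma SS_nonneg N theta : 0 <= SS a b beta Cs Cz N theta.
Proof.
  apply sumR_nonneg. intros k. apply Rmult_le_pos; [apply Rmult_le_pos|].
  - apply pow_le. lra.
  - left. apply exp_pos.
  - apply Rpower_rr_nonneg.
Qed.

Lemma SS_le theta : 0 <= theta -> SS a b beta Cs Cz m theta <= u ^ 3 * exp (theta * t) * s.
Proof.
  intros Htheta. unfold SS.
  apply Rle_trans with (INR m * (4 ^ m * exp (theta * t) * s)).
  - apply sumR_le_mul. intros k Hk. apply Rmult_le_compat.
    + apply Rmult_le_pos; [apply pow_le; lra | left; apply exp_pos].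
    + apply Rpower_rr_nonneg.
    + apply Rmult_le_compat; [apply pow_le; lra | left; apply exp_pos | |].
      * apply Rle_pow; [lra | lia].
      * rewrite Rpower_ell by exact Ha. apply exp_le_compat.
        assert (B ^ k <= u) by (apply Rle_pow; [lra | lia]).
        assert (0 <= theta * (L * (u - B ^ k))) by (apply Rmult_le_pos; nra). lra.
    + apply Rpower_rr_le. lra.
  - pose proof (INR_mul_pow4_le m B Hb). pose proof sqrt_K_ge_1.
    pose proof (exp_pos (theta * t)).
    replace (INR m * (4 ^ m * exp (theta * t) * s))
      with (INR m * 4 ^ m * (exp (theta * t) * s)) by ring.
    replace (u ^ 3 * exp (theta * t) * s) with (u ^ 3 * (exp (theta * t) * s)) by ring.
    apply Rmult_le_compat_r; [nra | assumption].
Qed.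

Lemma SS_zero_le : SS a b beta Cs Cz m 0 <= u ^ 3 * s.
Proof.
  pose proof (SS_le 0 (Rle_refl 0)) as H. rewrite Rmult_0_l, exp_0, Rmult_1_r in H. exact H.
Qed.

Lemma SS_mul_SS_le theta : 0 <= theta ->
  SS a b beta Cs Cz m theta * SS a b beta Cs Cz m 0 <= u ^ 6 * exp (theta * t) * K.
Proof.
  intros Htheta. pose proof (SS_le theta Htheta). pose proof SS_zero_le.
  pose proof (SS_nonneg m theta). pose proof (SS_nonneg m 0).
  apply Rle_trans with (u ^ 3 * exp (theta * t) * s * (u ^ 3 * s)).
  - apply Rmult_le_compat; lra.
  - right. rewrite <- sqrt_K_sqr at 3. ring.
Qed.

Lemma SS_mul_Cz_le theta : 0 <= theta ->
  SS a b beta Cs Cz m theta * Cz <= u ^ 3 * exp (theta * t) * K.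
Proof.
  intros Htheta. pose proof (SS_le theta Htheta). pose proof Cz_mul_sqrt_K_le.
  pose proof u_ge_1. assert (0 <= u ^ 3) by (apply pow_le; lra).
  pose proof (exp_pos (theta * t)).
  apply Rle_trans with (u ^ 3 * exp (theta * t) * s * Cz).
  - apply Rmult_le_compat_r; lra.
  - rewrite Rmult_assoc. apply Rmult_le_compat_l; [nra | lra].
Qed.

Lemma Rpower_rr_mul_SS_le : Rpower (r m) (1 / 2) * SS a b beta Cs Cz m 0 <= u ^ 3 * K.
Proof.
  pose proof SS_zero_le. pose proof (SS_nonneg m 0). pose proof (Rpower_rr_nonneg m (1/2)).
  pose proof (Rpower_rr_le m (1/2) ltac:(lra)).
  apply Rle_trans with (s * (u ^ 3 * s)); [apply Rmult_le_compat; lra|].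
  right. rewrite <- sqrt_K_sqr at 3. ring.
Qed.

Lemma Bt_mul_pow_le k : (k <= 6)%nat -> 0 <= B * t * u ^ k <= (2 * B + 3) * t ^ 7.
Proof.
  intros Hk. pose proof t_ge_1. pose proof u_ge_1.
  assert (Huk : u ^ k <= t ^ 6).
  { apply Rle_trans with (t ^ k); [apply pow_incr; split; [lra | apply u_le_t]|].
    apply Rle_pow; [lra | exact Hk]. }
  assert (0 <= u ^ k) by (apply pow_le; lra).
  assert (1 <= t ^ 6) by (apply pow_R1_Rle; lra).
  split; [apply Rmult_le_pos; nra|].
  replace (t ^ 7) with (t * t ^ 6) by ring.
  apply Rle_trans with (B * t * t ^ 6).
  - apply Rmult_le_compat_l; [nra | exact Huk].
  - rewrite Rmult_assoc. apply Rmult_le_compat_r; [nra | lra].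
Qed.

Lemma Bt_le : 0 <= B * t <= (2 * B + 3) * t ^ 7.
Proof.
  pose proof (Bt_mul_pow_le 0 ltac:(lia)) as Hle. simpl in Hle. rewrite Rmult_1_r in Hle.
  exact Hle.
Qed.

Lemma affine_le_gain : 0 <= 2 * (1 + B) * t + 1 <= (2 * B + 3) * t ^ 7.
Proof.
  pose proof t_ge_1. assert (1 <= t ^ 6) by (apply pow_R1_Rle; lra).
  assert (t <= t ^ 7) by (replace (t ^ 7) with (t * t ^ 6) by ring; nra).
  split; nra.
Qed.

Lemma Bt_mul_exp_exp_nonneg X Y : 0 <= B * t * exp X * exp Y.
Proof.
  pose proof Bt_le. pose proof (exp_pos X). pose proof (exp_pos Y).
  apply Rmult_le_pos; [apply Rmult_le_pos|]; lra.
Qed.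

Local Notation g := ((2 * B + 3) * t ^ 7 * exp (- (beta * t))).

(* The exponent condition is the margin [beta t] that the hypotheses on [beta] below leave in
   every summand of the error. *)
Lemma le_gain_mul_rr P X k : 0 <= P <= (2 * B + 3) * t ^ 7 ->
  X <= - (beta * t) - beta * (B * t) -> 0 <= k <= K * exp (beta * L) ->
  P * exp X * k <= g * r (S m).
Proof.
  intros HP HX Hk. rewrite rr_succ.
  replace (g * (K * exp (beta * L) * exp (- (beta * (B * t)))))
    with ((2 * B + 3) * t ^ 7 * exp (- (beta * t) - beta * (B * t)) * (K * exp (beta * L)))
    by (unfold Rminus; rewrite exp_plus, Ropp_mult_distr_l; ring).
  pose proof (exp_pos X).
  apply Rmult_le_compat; [apply Rmult_le_pos; lra | lra | | lra].
  apply Rmult_le_compat; [lra | lra | lra | apply exp_le_compat; exact HX].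
Qed.

Hypotheses (Hbeta_alpha : beta * (B + 1) <= alpha * (B - 1) - 1)
  (Hbeta_kappa : beta * (B + 1) <= kappa - 1/2)
  (Hbeta_gamma : beta * (B + 1) <= (3/2 - gamma) * B)
  (Hbeta_B : beta * (B + 1) <= (B - 1) / 2).

Lemma Emiss_le : Emiss a b beta Cs Cz (S m) <= g * r (S m).
Proof.
  unfold Emiss. rewrite Nat.sub_succ, Nat.sub_0_r, mu_succ, lam_pred, lam_succ, ln_exp, rr_pred.
  rewrite <- !exp_minus.
  replace (t - (t + B * t) / 2) with (- ((B - 1) * t / 2)) by field.
  replace ((t + B * t) / 2 - B * t) with (- ((B - 1) * t / 2)) by field.
  replace (t - B * t) with (- ((B - 1) * t / 2) + - ((B - 1) * t / 2)) by field.
  apply Rle_trans with ((2 * (1 + B) * t + 1)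
      * exp (- ((B - 1) * t / 2) + - ((B - 1) * t / 2) + - (beta * t)) * (K * exp (beta * L))).
  { right. rewrite !exp_plus. field. }
  pose proof t_ge_1. pose proof affine_le_gain. pose proof K_le_mul_exp. pose proof K_ge_1.
  apply le_gain_mul_rr; [lra | nra | lra].
Qed.

Lemma Ecom_le : Ecom a b beta Cs Cz alpha kappa (S m) <= 5 * (g * r (S m)).
Proof.
  unfold Ecom. rewrite Nat.sub_succ, Nat.sub_0_r, ln_lam_succ, !Rpower_ell_succ,
    !Rpower_lam_pred, lam_pred.
  assert (Halpha : 0 <= alpha) by nra.
  pose proof (SS_mul_SS_le alpha Halpha) as HSaS0.
  pose proof (SS_mul_Cz_le alpha Halpha) as HSaCz.
  pose proof (SS_mul_Cz_le 0 (Rle_refl 0)) as HS0Cz.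
  rewrite Rmult_0_l, exp_0, Rmult_1_r in HS0Cz.
  set (Sa := SS a b beta Cs Cz m alpha) in *. set (S0 := SS a b beta Cs Cz m 0) in *.
  pose proof t_ge_1. pose proof Bt_le. pose proof K_le_mul_exp. pose proof K_ge_1.
  pose proof (Bt_mul_pow_le 3 ltac:(lia)). pose proof (Bt_mul_pow_le 6 ltac:(lia)).
  pose proof Cz_sqr_le_K. pose proof (pow2_ge_0 Cz).
  assert (P1 : B * t * exp t * exp (- (alpha * (B * t))) * (Sa * S0) <= g * r (S m)).
  { apply Rle_trans with (B * t * u ^ 6 * exp (t + - (alpha * (B * t)) + alpha * t) * K).
    - rewrite !exp_plus.
      replace (B * t * u ^ 6 * (exp t * exp (- (alpha * (B * t))) * exp (alpha * t)) * K)
        with (B * t * exp t * exp (- (alpha * (B * t))) * (u ^ 6 * exp (alpha * t) * K)) by ring.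
      apply Rmult_le_compat_l; [apply Bt_mul_exp_exp_nonneg | exact HSaS0].
    - apply le_gain_mul_rr; [lra | nra | lra]. }
  assert (P2 : B * t * exp (1 / 2 * t) * exp (- (alpha * (B * t))) * (Sa * Cz) <= g * r (S m)).
  { apply Rle_trans with (B * t * u ^ 3 * exp (1 / 2 * t + - (alpha * (B * t)) + alpha * t) * K).
    - rewrite !exp_plus.
      replace (B * t * u ^ 3 * (exp (1 / 2 * t) * exp (- (alpha * (B * t))) * exp (alpha * t)) * K)
        with (B * t * exp (1 / 2 * t) * exp (- (alpha * (B * t))) * (u ^ 3 * exp (alpha * t) * K))
        by ring.
      apply Rmult_le_compat_l; [apply Bt_mul_exp_exp_nonneg | exact HSaCz].
    - apply le_gain_mul_rr; [lra | nra | lra]. }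
  assert (P3 : B * t * exp (1 / 2 * t) * exp (- kappa * t) * (S0 * Cz) <= g * r (S m)).
  { apply Rle_trans with (B * t * u ^ 3 * exp (1 / 2 * t + - kappa * t) * K).
    - rewrite !exp_plus.
      replace (B * t * u ^ 3 * (exp (1 / 2 * t) * exp (- kappa * t)) * K)
        with (B * t * exp (1 / 2 * t) * exp (- kappa * t) * (u ^ 3 * K)) by ring.
      apply Rmult_le_compat_l; [apply Bt_mul_exp_exp_nonneg | exact HS0Cz].
    - apply le_gain_mul_rr; [lra | nra | lra]. }
  assert (P4 : B * t * exp (- (alpha * (B * t))) * Cz ^ 2 <= g * r (S m))
    by (apply le_gain_mul_rr; [lra | nra | lra]).
  assert (P5 : B * t * exp (- kappa * t) * Cz ^ 2 <= g * r (S m))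
    by (apply le_gain_mul_rr; [lra | nra | lra]).
  lra.
Qed.

Lemma Etime_le : Etime a b beta Cs Cz (S m) <= g * r (S m).
Proof.
  unfold Etime, ell.
  rewrite Nat.sub_succ, Nat.sub_0_r, Rinv_inv, ln_lam_succ, Rpower_lam_succ, lam_succ.
  replace (B * t * exp (- (3 / 2) * (B * t)) * Rpower (r m) (1 / 2) * exp (B * t))
    with (B * t * exp (- (3 / 2) * (B * t) + B * t) * Rpower (r m) (1 / 2))
    by (rewrite exp_plus; ring).
  pose proof t_ge_1. pose proof Bt_le. pose proof K_le_mul_exp.
  pose proof (Rpower_rr_le_K m (1/2) ltac:(lra)). pose proof (Rpower_rr_nonneg m (1/2)).
  apply le_gain_mul_rr; [lra | nra | lra].
Qed.

Lemma Edis_le : Edis a b beta Cs Cz gamma nu (S m) <= Rabs nu * (g * r (S m)).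
Proof.
  unfold Edis. rewrite Nat.sub_succ, Nat.sub_0_r, ln_lam_succ, Rpower_lam_succ.
  replace (B * t * Rabs nu * exp ((gamma - 3 / 2) * (B * t)) * Rpower (r m) (1 / 4))
    with (Rabs nu * (B * t * exp ((gamma - 3 / 2) * (B * t)) * Rpower (r m) (1 / 4))) by ring.
  apply Rmult_le_compat_l; [apply Rabs_pos|].
  pose proof t_ge_1. pose proof Bt_le. pose proof K_le_mul_exp.
  pose proof (Rpower_rr_le_K m (1/4) ltac:(lra)). pose proof (Rpower_rr_nonneg m (1/4)).
  apply le_gain_mul_rr; [lra | nra | lra].
Qed.

Lemma Etrans_le : Etrans a b beta Cs Cz (S m) <= g * r (S m).
Proof.
  unfold Etrans. rewrite Nat.sub_succ, Nat.sub_0_r, ln_lam_succ, Rpower_lam_succ, Rpower_lam_pred.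
  apply Rle_trans with (B * t * u ^ 3 * exp (1 / 2 * t + - (1 / 2) * (B * t)) * K).
  - rewrite exp_plus.
    replace (B * t * u ^ 3 * (exp (1 / 2 * t) * exp (- (1 / 2) * (B * t))) * K)
      with (B * t * exp (1 / 2 * t) * exp (- (1 / 2) * (B * t)) * (u ^ 3 * K)) by ring.
    replace (B * t * exp (1 / 2 * t) * exp (- (1 / 2) * (B * t)) * Rpower (r m) (1 / 2)
               * SS a b beta Cs Cz m 0)
      with (B * t * exp (1 / 2 * t) * exp (- (1 / 2) * (B * t))
              * (Rpower (r m) (1 / 2) * SS a b beta Cs Cz m 0)) by ring.
    apply Rmult_le_compat_l; [apply Bt_mul_exp_exp_nonneg | apply Rpower_rr_mul_SS_le].
  - pose proof t_ge_1. pose proof (Bt_mul_pow_le 3 ltac:(lia)). pose proof K_le_mul_exp.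
    pose proof K_ge_1. apply le_gain_mul_rr; [lra | nra | lra].
Qed.

Lemma Esto_le : Esto a b beta Cs Cz (S m) <= g * r (S m).
Proof.
  unfold Esto. rewrite Nat.sub_succ, Nat.sub_0_r, ln_lam_succ, Rpower_lam_succ, Rmult_assoc.
  pose proof (Rpower_rr_nonneg m (1/2)). pose proof (Rpower_rr_le m (1/2) ltac:(lra)).
  pose proof Cz_mul_sqrt_K_le. pose proof K_le_mul_exp.
  pose proof t_ge_1. pose proof Bt_le.
  assert (0 <= Rpower (r m) (1 / 2) * Cz) by (apply Rmult_le_pos; lra).
  assert (Rpower (r m) (1 / 2) * Cz <= K).
  { apply Rle_trans with (s * Cz); [apply Rmult_le_compat_r|]; lra. }
  apply le_gain_mul_rr; [lra | nra | lra].
Qed.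

Lemma error_sum_le C : 0 < C ->
  C * (9 + Rabs nu) * (2 * B + 3) * (INR 8 / beta) ^ 8 <= L ->
  C * (Emiss a b beta Cs Cz (S m) + Ecom a b beta Cs Cz alpha kappa (S m)
       + Etime a b beta Cs Cz (S m) + Edis a b beta Cs Cz gamma nu (S m)
       + Etrans a b beta Cs Cz (S m) + Esto a b beta Cs Cz (S m))
    <= r (S m).
Proof.
  intros HC HLC.
  pose proof Emiss_le. pose proof Ecom_le. pose proof Etime_le.
  pose proof Edis_le. pose proof Etrans_le. pose proof Esto_le.
  assert (Hgain : C * (9 + Rabs nu) * g <= 1).
  { pose proof (Rabs_pos nu). pose proof t_ge_L.
    replace (C * (9 + Rabs nu) * g)
      with (C * (9 + Rabs nu) * (2 * B + 3) * t ^ 7 * exp (- (beta * t))) by ring.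
    apply pow_mul_exp_neg_le; [| lra | lra | lra].
    apply Rmult_lt_0_compat; [apply Rmult_lt_0_compat|]; lra. }
  pose proof (rr_pos (S m)). pose proof (exp_pos (- (beta * t))).
  assert (0 <= g) by (pose proof Bt_le; pose proof t_ge_1; apply Rmult_le_pos; nra).
  apply Rle_trans with (C * (9 + Rabs nu) * g * r (S m)); [|nra].
  replace (C * (9 + Rabs nu) * g * r (S m)) with (C * ((9 + Rabs nu) * (g * r (S m)))) by ring.
  apply Rmult_le_compat_l; lra.
Qed.

End Estimates.

Lemma exists_beta alpha kappa gamma B :
  2 <= B -> 1 < alpha * (B - 1) -> 1/2 < kappa -> gamma < 3/2 ->
  exists beta, 0 < beta /\ beta < 1 /\ beta < (alpha * (B - 1) - 1) / B /\
    beta * (B + 1) <= alpha * (B - 1) - 1 /\ beta * (B + 1) <= kappa - 1/2 /\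
    beta * (B + 1) <= (3/2 - gamma) * B /\ beta * (B + 1) <= (B - 1) / 2.
Proof.
  intros HB Halpha Hkappa Hgamma.
  set (d := Rmin (Rmin (alpha * (B - 1) - 1) (kappa - 1/2)) (Rmin ((3/2 - gamma) * B) (B / 4))).
  assert (Hd : 0 < d) by (apply Rmin_pos; apply Rmin_pos; nra).
  assert (Hd1 : d <= alpha * (B - 1) - 1)
    by (apply Rle_trans with (1 := Rmin_l _ _), Rmin_l).
  assert (Hd2 : d <= kappa - 1/2) by (apply Rle_trans with (1 := Rmin_l _ _), Rmin_r).
  assert (Hd3 : d <= (3/2 - gamma) * B) by (apply Rle_trans with (1 := Rmin_r _ _), Rmin_l).
  assert (Hd4 : d <= B / 4) by (apply Rle_trans with (1 := Rmin_r _ _), Rmin_r).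
  exists (d / (2 * B)).
  assert (Hbeta : 0 < d / (2 * B)) by (apply Rdiv_lt_0_compat; lra).
  assert (Hdelta : d / (2 * B) * (B + 1) <= d).
  { replace d with (d / (2 * B) * (2 * B)) at 2 by (field; lra). nra. }
  repeat split; try lra.
  - apply Rle_lt_trans with (B / 4 / (2 * B)).
    + unfold Rdiv. apply Rmult_le_compat_r; [left; apply Rinv_0_lt_compat |]; lra.
    + replace (B / 4 / (2 * B)) with (1 / 8) by (field; lra). lra.
  - set (d1 := alpha * (B - 1) - 1) in *.
    replace (d1 / B) with (d1 / (2 * B) + d1 / (2 * B)) by (field; lra).
    assert (0 < d1 / (2 * B)) by (apply Rdiv_lt_0_compat; lra).
    assert (d / (2 * B) <= d1 / (2 * B)).
    { unfold Rdiv. apply Rmult_le_compat_r; [left; apply Rinv_0_lt_compat |]; lra. }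
    lra.
Qed.

Lemma exists_nat_ln_ge x : exists a : nat, (0 < a)%nat /\ x <= ln (INR a).
Proof.
  destruct (INR_unbounded (exp x)) as [a Ha]. pose proof (exp_pos x).
  exists a. split.
  - apply INR_lt. simpl. lra.
  - rewrite <- (ln_exp x) at 1. left. apply ln_increasing; lra.
Qed.

Lemma INR_ge_2 n : 1 < INR n -> 2 <= INR n.
Proof.
  intros Hn. change 1 with (INR 1) in Hn. apply INR_lt, le_INR in Hn. simpl in Hn. lra.
Qed.

Theorem mainTheorem2 (alpha kappa gamma nu : R)
  (Halpha : 0 < alpha) (Hkappa : 1/2 < kappa) (Hgamma : gamma < 3/2) :
  forall C : R, 1 < C ->
  forall b : nat, 1 + / alpha < INR b ->
  exists (a : nat) (beta : R),
    0 < beta /\ beta < 1 /\ beta < (alpha * (INR b - 1) - 1) / INR b /\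
    forall Cstart Cz : R, 1 <= Cstart -> 0 <= Cz ->
    forall n : nat, (1 <= n)%nat ->
      (* (R1) *) mu a b n <= lam a b n /\
      (* (R2) *) ell a b n <= 1 /\
      (* (R3) *) (exists m : nat, lam a b n = INR m) /\
                 12 * lam a b n <= 4 * mu a b (S n) /\
                 10 <= mu a b n /\
                 48 * lam a b n <= lam a b (S n) /\
      C * (Emiss a b beta Cstart Cz n
           + Ecom a b beta Cstart Cz alpha kappa n
           + Etime a b beta Cstart Cz n
           + Edis a b beta Cstart Cz gamma nu n
           + Etrans a b beta Cstart Cz n
           + Esto a b beta Cstart Cz n)
        <= rr a b beta Cstart Cz n.
Proof.
  intros C HC b Hb.
  assert (HB : 2 <= INR b) by (apply INR_ge_2; pose proof (Rinv_0_lt_compat _ Halpha); lra).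
  assert (Hab : 1 < alpha * (INR b - 1)).
  { pose proof (Rinv_r alpha ltac:(lra)). nra. }
  destruct (exists_beta alpha kappa gamma (INR b) HB Hab Hkappa Hgamma)
    as (beta & Hbeta & Hbeta1 & Hbeta_lt & Hba & Hbk & Hbg & HbB).
  set (L0 := C * (9 + Rabs nu) * (2 * INR b + 3) * (INR 8 / beta) ^ 8).
  destruct (exists_nat_ln_ge (Rmax 24 L0)) as (a & Ha & HL).
  pose proof (Rle_trans _ _ _ (Rmax_l 24 L0) HL) as HL24.
  pose proof (Rle_trans _ _ _ (Rmax_r 24 L0) HL) as HL0.
  exists a, beta. split; [|split; [|split]]; try assumption.
  intros Cs Cz HCs HCz [|m] Hm; [lia|].
  repeat split.
  - exact (mu_le_lam a b m Ha HL24 HB).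
  - exact (ell_le_1 a b m Ha HL24 HB).
  - exists (Nat.pow a (Nat.pow b (S m))). reflexivity.
  - exact (lam_le_mu_succ a b m Ha HL24 HB).
  - exact (mu_ge_10 a b m Ha HL24 HB).
  - exact (lam_mul48_le a b m Ha HL24 HB).
  - apply (error_sum_le alpha kappa gamma nu a b beta Cs Cz m); try assumption; lra.
Qed.
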